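(* For every integer $k\geq 2$, let $G_k$ be the graph obtained as follows: take two vertices $u_1,u_2$ joined by $2k$ parallel edges $e_1,\dots,e_{2k}$; subdivide each $e_i$ once by a new vertex $v_i$; and for every odd $i\in\{1,3,\dots,2k-1\}$ add $2k-2$ parallel edges between $v_i$ and $v_{i+1}$. Let $\mathcal O$ be the set of $k$ pairwise edge-disjoint $4$-cycles $u_1v_iu_2v_{i+1}u_1$ (using the subdivided edges), $i\in\{1,3,\dots,2k-1\}$. Then $G_k$ is a $2$-connected $2k$-regular graph, and if $t$ is a positive integer such that some $t$-factor of $G_k$ intersects every cycle of $\mathcal O$ in at least one edge, then $t \geq k$.
   Context: Graphs are finite and loopless but may have parallel edges. A cycle is a connected $2$-regular subgraph. A $t$-factor is a spanning $t$-regular subgraph. $2$-connected means connected with no cut-vertex. *)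

From mathcomp Require Import all_boot.
Set Implicit Arguments. Unset Strict Implicit. Unset Printing Implicit Defensive.

Section MultiGraph.
Variables (V E : finType) (ends : E -> V * V).

Definition loopless : Prop := forall e, (ends e).1 != (ends e).2.

Definition incident (v : V) (e : E) : bool :=
  (v == (ends e).1) || (v == (ends e).2).

(* degree of v in the spanning subgraph with edge set F (loopless graphs) *)
Definition deg_in (F : {set E}) (v : V) : nat := #|[set e in F | incident v e]|.

Definition regular (d : nat) : Prop := forall v, deg_in [set: E] v = d.

Definition factor (t : nat) (F : {set E}) : Prop := forall v, deg_in F v = t.

(* adjacency in the graph with the vertex w deleted (w = None: delete nothing) *)
Definition adj_avoid (w : option V) : rel V :=
  fun x y => [exists e, ((ends e == (x, y)) || (ends e == (y, x)))
                        && (Some x != w) && (Some y != w)].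

Definition connected : Prop := forall x y, connect (adj_avoid None) x y.

Definition cut_vertex (v : V) : Prop :=
  exists x y, x != v /\ y != v /\ ~~ connect (adj_avoid (Some v)) x y.

Definition two_connected : Prop := connected /\ forall v, ~ cut_vertex v.
End MultiGraph.

(* The graph G_k.  Vertices: inl false = u1, inl true = u2,
   inr (j, false) = v_{2j+1}, inr (j, true) = v_{2j+2}  (j < k). *)
Definition Gk_V (k : nat) : finType := (bool + ('I_k * bool))%type.

(* Edges: inl ((j,b), c) = the half of the subdivided edge joining u_c to v_(j,b);
          inr (j, m)     = the m-th of the 2k-2 parallel edges joining
                           v_{2j+1} and v_{2j+2}. *)
Definition Gk_E (k : nat) : finType :=
  ((('I_k * bool) * bool) + ('I_k * 'I_(2 * k - 2)))%type.

Definition Gk_ends (k : nat) (e : Gk_E k) : Gk_V k * Gk_V k :=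
  match e with
  | inl (jb, c) => (inl c, inr jb)
  | inr (j, _) => (inr (j, false), inr (j, true))
  end.

(* edge set of the 4-cycle u1 v_{2j+1} u2 v_{2j+2} u1 of the family O *)
Definition Gk_cycle (k : nat) (j : 'I_k) : {set Gk_E k} :=
  [set e : Gk_E k | if e is inl (jb, _) then jb.1 == j else false].

(* Summing the F-degrees of the two subdivision vertices of the j-th
   4-cycle gives 2t = |F ∩ C_j| + 2 |F ∩ R_j|, where R_j is the bundle of 2k-2
   parallel edges between them; so |F ∩ C_j| is even, and positive by hypothesis,
   hence at least 2.  Summing the F-degrees of u1 and u2 counts every edge of F
   lying on some C_j exactly once, so 2t = Σ_j |F ∩ C_j| ≥ 2k.  Two-connectivity
   holds because after deleting any vertex some u_c survives, and every remaining
   vertex reaches it through a subdivided edge. *)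
From mathcomp Require Import all_boot zify.
Set Implicit Arguments. Unset Strict Implicit. Unset Printing Implicit Defensive.

Section MultiGraphFacts.
Variables (V E : finType) (ends : E -> V * V).

Lemma adj_avoid_sym w : symmetric (adj_avoid ends w).
Proof.
move=> x y; apply/existsP/existsP => -[e He]; exists e; move: He;
by rewrite orbC -!andbA [(Some y != w) && _]andbC.
Qed.

Lemma connect_avoid_edge w e :
  Some (ends e).1 != w -> Some (ends e).2 != w ->
  connect (adj_avoid ends w) (ends e).1 (ends e).2.
Proof.
move=> h1 h2; apply: connect1; apply/existsP; exists e.
by rewrite -surjective_pairing eqxx h1 h2.
Qed.

Lemma connect_avoid_sym w : connect_sym (adj_avoid ends w).
Proof. exact/sym_connect_sym/adj_avoid_sym. Qed.

Lemma connect_avoid_hub w h :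
    (forall x, Some x != w -> connect (adj_avoid ends w) x h) ->
  forall x y, Some x != w -> Some y != w -> connect (adj_avoid ends w) x y.
Proof.
move=> to_h x y hx hy; apply: connect_trans (to_h x hx) _.
by rewrite connect_avoid_sym; apply: to_h.
Qed.

Lemma two_connected_avoid :
    (forall w x y, Some x != w -> Some y != w -> connect (adj_avoid ends w) x y) ->
  two_connected ends.
Proof.
move=> conn; split=> [x y | v [x [y [xv [yv]]]]]; first exact: conn.
by rewrite conn.
Qed.

Lemma deg_inE F v : deg_in ends F v = \sum_(e in F) incident ends v e.
Proof.
rewrite /deg_in -sum1_card big_mkcond [RHS]big_mkcond; apply: eq_bigr => e _.
by rewrite inE; case: (e \in F); case: incident.
Qed.

Lemma deg_in_setTE v : deg_in ends [set: E] v = \sum_e incident ends v e.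
Proof. by rewrite deg_inE; apply: eq_bigl => e; rewrite inE. Qed.

Lemma deg_in_pair F x y :
  deg_in ends F x + deg_in ends F y = \sum_(e in F) (incident ends x e + incident ends y e).
Proof. by rewrite !deg_inE big_split. Qed.

End MultiGraphFacts.

Lemma card_setI_sum (T : finType) (F A : {set T}) : #|F :&: A| = \sum_(e in F) (e \in A).
Proof.
rewrite -sum1_card big_mkcond [RHS]big_mkcond; apply: eq_bigr => e _.
by rewrite inE; case: (e \in F); case: (e \in A).
Qed.

Lemma sum_prod (I J : finType) (f : I * J -> nat) :
  \sum_p f p = \sum_i \sum_j f (i, j).
Proof. by rewrite pair_bigA; apply: eq_bigr => -[]. Qed.

Section Gk.
Variable k : nat.

Local Notation E := (Gk_E k).
Local Notation ends := (@Gk_ends k).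

Definition Gk_rungs (j : 'I_k) : {set E} :=
  [set e : E | if e is inr (j', _) then j' == j else false].

Lemma Gk_loopless : loopless ends.
Proof. by case=> [[jb c]|[j m]] //=; apply/negP => /eqP []. Qed.

Lemma Gk_incident_hub c (e : E) :
  incident ends (inl c) e = if e is inl (_, c') then c == c' else false.
Proof. by case: e => [[jb c']|[j m]]; rewrite /incident /=; case: c => //; case: c'. Qed.

Lemma Gk_incident_sub j b (e : E) :
  incident ends (inr (j, b)) e =
  match e with inl (jb, _) => jb == (j, b) | inr (j', _) => j == j' end.
Proof.
case: e => [[jb c]|[j' m]]; rewrite /incident /=; first exact: eq_sym.
case: (eqVneq j j') => [->|ne]; first by case: b; rewrite eqxx ?orbT.
by apply/negP => /orP [] /eqP [] /eqP; rewrite (negbTE ne).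
Qed.

Lemma Gk_deg_hub c : deg_in ends [set: E] (inl c) = 2 * k.
Proof.
rewrite deg_in_setTE big_sumType /= [X in _ + X]big1 => [|[j m] _]; last by rewrite Gk_incident_hub.
rewrite addn0 sum_prod.
under eq_bigr => jb _ do rewrite big_bool !Gk_incident_hub /= eqb_id eqbF_neg addnC addn_negb.
by rewrite sum_nat_const card_prod card_ord card_bool muln1 mulnC.
Qed.

Section NonemptyGk.
(* Without it [2 * k - 2] truncates and G_0 has no subdivision vertex. *)
Hypothesis k_gt0 : 0 < k.

Lemma Gk_deg_sub j b : deg_in ends [set: E] (inr (j, b)) = 2 * k.
Proof.
rewrite deg_in_setTE big_sumType /= [X in X + _]sum_prod [X in _ + X]sum_prod.
under eq_bigr => jb _ do rewrite big_bool !Gk_incident_sub /=.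
under [X in _ + X]eq_bigr => j' _ do under eq_bigr => m _ do rewrite Gk_incident_sub.
rewrite (bigD1 (j, b)) //= eqxx big1 => [|jb /negbTE -> //].
rewrite (bigD1 j) //= eqxx sum_nat_const card_ord big1 => [|j' ne]; first lia.
by rewrite big1 // => m _; rewrite eq_sym (negbTE ne).
Qed.

Lemma Gk_regular : regular ends (2 * k).
Proof. by case=> [c|[j b]]; [apply: Gk_deg_hub | apply: Gk_deg_sub]. Qed.

Lemma Gk_connect_spoke w jb c : Some (inr jb) != w -> Some (inl c) != w ->
  connect (adj_avoid ends w) (inr jb) (inl c).
Proof.
by move=> hv hu; rewrite connect_avoid_sym; apply: (connect_avoid_edge (e := inl (jb, c))).
Qed.

Lemma Gk_connect_avoid w x y : Some x != w -> Some y != w ->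
  connect (adj_avoid ends w) x y.
Proof.
have [c hub] : exists c, Some (inl c) != w.
  by case: w => [[c|jb]|]; [exists (~~ c); case: c | exists false | exists false].
have [v0 hv0] : exists jb, Some (inr jb) != w.
  pose j0 : 'I_k := Ordinal k_gt0.
  case: w {hub} => [[c'|[j b]]|]; [exists (j0, false) | exists (j, ~~ b) | exists (j0, false)] => //.
  by apply/eqP => -[]; case: b.
apply: (connect_avoid_hub (h := inl c)) => -[c'|jb] h; last exact: Gk_connect_spoke.
have [-> | _] := eqVneq c' c; first exact: connect0.
apply: (connect_trans _ (Gk_connect_spoke hv0 hub)).
by rewrite connect_avoid_sym; apply: Gk_connect_spoke.
Qed.

Lemma Gk_two_connected : two_connected ends.
Proof. exact/two_connected_avoid/Gk_connect_avoid. Qed.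

End NonemptyGk.

Lemma Gk_incident_hubs (e : E) :
  incident ends (inl false) e + incident ends (inl true) e = \sum_j (e \in Gk_cycle j).
Proof.
rewrite !Gk_incident_hub; case: e => [[[j b] c]|[j m]] /=; last by rewrite big1 // => j' _; rewrite inE.
rewrite (bigD1 j) //= inE eqxx big1 => [|j' ne]; first by case: c.
by rewrite inE eq_sym (negbTE ne).
Qed.

Lemma Gk_incident_sub_pair j (e : E) :
  incident ends (inr (j, false)) e + incident ends (inr (j, true)) e =
  (e \in Gk_cycle j) + 2 * (e \in Gk_rungs j).
Proof.
rewrite !Gk_incident_sub !inE; case: e => [[[j' b] c]|[j' m]] /=.
  by rewrite !xpair_eqE; case: (j' == j); case: b.
by rewrite eq_sym; case: (j' == j).
Qed.

Lemma Gk_deg_hubs F :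
  deg_in ends F (inl false) + deg_in ends F (inl true) = \sum_j #|F :&: Gk_cycle j|.
Proof.
under [RHS]eq_bigr => j _ do rewrite card_setI_sum.
by rewrite deg_in_pair exchange_big; apply: eq_bigr => e _; apply: Gk_incident_hubs.
Qed.

Lemma Gk_deg_sub_pair F j :
  deg_in ends F (inr (j, false)) + deg_in ends F (inr (j, true)) =
  #|F :&: Gk_cycle j| + 2 * #|F :&: Gk_rungs j|.
Proof.
rewrite deg_in_pair !card_setI_sum big_distrr -big_split /=.
by apply: eq_bigr => e _; apply: Gk_incident_sub_pair.
Qed.

Lemma Gk_factor_meets_cycle t F j : factor ends t F -> F :&: Gk_cycle j != set0 ->
  1 < #|F :&: Gk_cycle j|.
Proof.
move=> tF; rewrite -card_gt0 => meets.
have := Gk_deg_sub_pair F j; rewrite !tF; lia.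
Qed.

Lemma Gk_factor_ge t F : factor ends t F ->
  (forall j, F :&: Gk_cycle j != set0) -> k <= t.
Proof.
move=> tF meets; have := Gk_deg_hubs F; rewrite !tF.
have : \sum_(j < k) 2 <= \sum_j #|F :&: Gk_cycle j|.
  by apply: leq_sum => j _; apply: Gk_factor_meets_cycle.
rewrite sum_nat_const card_ord; lia.
Qed.

End Gk.

Theorem mainTheorem15 (k : nat) (hk : 2 <= k) :
  loopless (@Gk_ends k) /\
  two_connected (@Gk_ends k) /\
  regular (@Gk_ends k) (2 * k) /\
  (forall (t : nat) (F : {set Gk_E k}), 0 < t ->
     factor (@Gk_ends k) t F ->
     (forall j : 'I_k, F :&: Gk_cycle j != set0) ->
     k <= t).
Proof.
have k_gt0 : 0 < k by apply: ltnW.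
split; first exact: Gk_loopless.
split; first exact: Gk_two_connected k_gt0.
split; first exact: Gk_regular k_gt0.
by move=> t F _; apply: Gk_factor_ge.
Qed.
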